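(* Let $X$ be a real Hilbert space, $f:X\to\mathbb{R}\cup\{+\infty\}$ a proper $\Phi_{lsc}$-convex function and $\bar x\in\mathrm{dom}(f)$. If $(a,v)\in\partial^{loc}_{lsc}f(\bar x)$, then there exists $\bar a\ge 0$ such that $(\bar a,\ v-2a\bar x+2\bar a\bar x)\in\partial_{lsc}f(\bar x)$.
   Context: $\Phi_{lsc}$ is the class of functions $\varphi(x)=-a\|x\|^2+\langle v,x\rangle+c$ ($a\ge0$, $v\in X^*$, $c\in\mathbb{R}$); $\mathrm{supp}(f)=\{\varphi\in\Phi_{lsc}:\varphi\le f\}$; $f$ is $\Phi_{lsc}$-convex if $f=\sup\mathrm{supp}(f)$ pointwise; proper means $\mathrm{supp}(f)\ne\emptyset$ and $\mathrm{dom}(f)\ne\emptyset$. For $\varepsilon\ge0$ and $\bar x\in\mathrm{dom}(f)$, a pair $(a,v)\in\mathbb{R}_+\times X^*$ is an $\varepsilon$-$\Phi_{lsc}$-subgradient of $f$ at $\bar x$ if $f(x)-f(\bar x)\ge\langle v,x-\bar x\rangle-a\|x\|^2+a\|\bar x\|^2-\varepsilon$ for all $x\in X$; the set of these is $\partial^\varepsilon_{lsc}f(\bar x)$, and $\partial_{lsc}f(\bar x):=\partial^0_{lsc}f(\bar x)$. A pair $(a,v)\in\mathbb{R}_+\times X^*$ is a local $\Phi_{lsc}$-subgradient of $f$ at $\bar x$ if there is $\delta>0$ such that $f(x)-f(\bar x)\ge\langle v,x-\bar x\rangle-a\|x\|^2+a\|\bar x\|^2$ for all $x$ with $\|x-\bar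 x\|<\delta$; the set of these is $\partial^{loc}_{lsc}f(\bar x)$. *)

From Stdlib Require Import Reals.
Open Scope R_scope.

Class RealHilbert (X : Type) := {
  vzero : X;
  vadd : X -> X -> X;
  vopp : X -> X;
  vscal : R -> X -> X;
  inner : X -> X -> R;
  vadd_assoc : forall x y z, vadd x (vadd y z) = vadd (vadd x y) z;
  vadd_comm : forall x y, vadd x y = vadd y x;
  vadd_0 : forall x, vadd x vzero = x;
  vadd_opp : forall x, vadd x (vopp x) = vzero;
  vscal_1 : forall x, vscal 1 x = x;
  vscal_assoc : forall a b x, vscal a (vscal b x) = vscal (a * b) x;
  vscal_distr_v : forall a x y, vscal a (vadd x y) = vadd (vscal a x) (vscal a y);
  vscal_distr_s : forall a b x, vscal (a + b) x = vadd (vscal a x) (vscal b x);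
  inner_sym : forall x y, inner x y = inner y x;
  inner_add_l : forall x y z, inner (vadd x y) z = inner x z + inner y z;
  inner_scal_l : forall a x y, inner (vscal a x) y = a * inner x y;
  inner_pos : forall x, 0 <= inner x x;
  inner_def : forall x, inner x x = 0 -> x = vzero;
  complete : forall u : nat -> X,
    (forall eps, eps > 0 -> exists N, forall m n, (m >= N)%nat -> (n >= N)%nat ->
        sqrt (inner (vadd (u m) (vopp (u n))) (vadd (u m) (vopp (u n)))) < eps) ->
    exists l, forall eps, eps > 0 -> exists N, forall n, (n >= N)%nat ->
        sqrt (inner (vadd (u n) (vopp l)) (vadd (u n) (vopp l))) < eps
}.

Section Defs.
Context {X : Type} `{RealHilbert X}.

Definition vsub (x y : X) : X := vadd x (vopp y).
Definition sqnorm (x : X) : R := inner x x.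

Inductive ERbar := Fin (r : R) | PInf.

Definition le_ER (r : R) (e : ERbar) : Prop :=
  match e with Fin y => r <= y | PInf => True end.
Definition lt_ER (r : R) (e : ERbar) : Prop :=
  match e with Fin y => r < y | PInf => True end.

(** phi(x) = -a||x||^2 + <v,x> + c, with a >= 0 (X^* identified with X by Riesz) *)
Definition phi_lsc (a : R) (v : X) (c : R) (x : X) : R :=
  - a * sqnorm x + inner v x + c.

Definition in_supp (f : X -> ERbar) (a : R) (v : X) (c : R) : Prop :=
  0 <= a /\ forall x, le_ER (phi_lsc a v c x) (f x).

Definition dom (f : X -> ERbar) (x : X) : Prop := exists r, f x = Fin r.

(** f = sup supp(f) pointwise (sup taken in the extended reals) *)
Definition Phi_lsc_convex (f : X -> ERbar) : Prop :=
  forall x r, lt_ER r (f x) ->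
    exists a v c, in_supp f a v c /\ r < phi_lsc a v c x.

Definition proper (f : X -> ERbar) : Prop :=
  (exists a v c, in_supp f a v c) /\ (exists x, dom f x).

Definition eps_subgrad (eps : R) (f : X -> ERbar) (xb : X) (a : R) (v : X) : Prop :=
  0 <= a /\
  exists fxb, f xb = Fin fxb /\
  forall x, match f x with
            | Fin fx => fx - fxb >= inner v (vsub x xb) - a * sqnorm x + a * sqnorm xb - eps
            | PInf => True
            end.

Definition subgrad (f : X -> ERbar) (xb : X) (a : R) (v : X) : Prop :=
  eps_subgrad 0 f xb a v.

Definition loc_subgrad (f : X -> ERbar) (xb : X) (a : R) (v : X) : Prop :=
  0 <= a /\
  exists fxb, f xb = Fin fxb /\
  exists delta, delta > 0 /\
  forall x, sqrt (sqnorm (vsub x xb)) < delta ->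
     match f x with
     | Fin fx => fx - fxb >= inner v (vsub x xb) - a * sqnorm x + a * sqnorm xb
     | PInf => True
     end.

End Defs.

(** Both hypotheses and conclusion are easiest to read after recentring at
    [xb]: with [h = x - xb], the pair [(a, v)] is a Φ-subgradient at [xb] iff
    [f x - f xb >= <v - 2 a xb, h> - a ||h||^2].  Near [xb] this holds with the
    given [a]; far from [xb] a global minorant [-a0||x||^2 + <v0,x> + c0] of [f]
    (which exists since [f] is proper) recentres to the same shape, and the
    resulting affine-in-[h] defect is absorbed by enlarging the quadratic
    coefficient, because [||h||^2 >= d^2] there.  Taking the larger of the two
    coefficients gives [ab]. *)

From Stdlib Require Import Reals Lra Psatz.
Open Scope R_scope.

Section InnerProduct.
Context {X : Type} `{RealHilbert X}.

Lemma inner_zero_l z : inner vzero z = 0.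
Proof.
  assert (E : inner (vadd vzero vzero) z = inner vzero z + inner vzero z)
    by apply inner_add_l.
  rewrite vadd_0 in E. lra.
Qed.

Lemma inner_opp_l y z : inner (vopp y) z = - inner y z.
Proof.
  assert (E : inner (vadd y (vopp y)) z = inner y z + inner (vopp y) z)
    by apply inner_add_l.
  rewrite vadd_opp, inner_zero_l in E. lra.
Qed.

Lemma inner_sub_l x y z : inner (vsub x y) z = inner x z - inner y z.
Proof. unfold vsub. rewrite inner_add_l, inner_opp_l. ring. Qed.

Lemma inner_add_r x y z : inner z (vadd x y) = inner z x + inner z y.
Proof. rewrite inner_sym, inner_add_l, (inner_sym x), (inner_sym y). reflexivity. Qed.

Lemma vadd_sub x y : vadd y (vsub x y) = x.
Proof.
  unfold vsub. rewrite vadd_comm, <- vadd_assoc, (vadd_comm (vopp y)).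
  rewrite vadd_opp. apply vadd_0.
Qed.

Lemma vadd_subK x y : vsub (vadd x y) y = x.
Proof. unfold vsub. rewrite <- vadd_assoc, vadd_opp. apply vadd_0. Qed.

Lemma sqnorm_add x y : sqnorm (vadd x y) = sqnorm x + 2 * inner x y + sqnorm y.
Proof.
  unfold sqnorm. rewrite inner_add_l, !inner_add_r, (inner_sym y x). ring.
Qed.

Lemma inner_ge_half_sqnorm u h : - (sqnorm u + sqnorm h) / 2 <= inner u h.
Proof. pose proof (inner_pos (vadd u h)) as P. fold (sqnorm (vadd u h)) in P.
  rewrite sqnorm_add in P. lra.
Qed.

Lemma phi_gap_recentre a v x xb :
  inner v (vsub x xb) - a * sqnorm x + a * sqnorm xb =
  inner (vsub v (vscal (2 * a) xb)) (vsub x xb) - a * sqnorm (vsub x xb).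
Proof.
  rewrite <- (vadd_sub x xb) at 2. rewrite sqnorm_add, inner_sub_l, inner_scal_l.
  ring.
Qed.

Lemma phi_lsc_recentre a v c x xb :
  phi_lsc a v c x =
  phi_lsc a v c xb + inner (vsub v (vscal (2 * a) xb)) (vsub x xb)
  - a * sqnorm (vsub x xb).
Proof.
  pose proof (phi_gap_recentre a v x xb) as E.
  rewrite (inner_sym v), inner_sub_l, (inner_sym x), (inner_sym xb) in E.
  unfold phi_lsc. lra.
Qed.

Lemma quadratic_nonneg_far (u : X) (K d : R) :
  0 < d -> exists c,
    forall h, d * d <= sqnorm h -> 0 <= K + inner u h + c * sqnorm h.
Proof.
  intros Hd.
  (* With [<u,h> >= -(||u||^2 + ||h||^2)/2], the coefficient [1/2] absorbs
     [||h||^2/2] and [|M|/d^2] absorbs the constant [M]. *)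
  set (M := sqnorm u / 2 - K).
  exists (1 / 2 + Rabs M / (d * d)).
  assert (Hdd : 0 < d * d) by nra.
  intros h Hh.
  assert (HM : M <= Rabs M / (d * d) * sqnorm h).
  { apply Rle_trans with (Rabs M / (d * d) * (d * d)).
    - unfold Rdiv. rewrite Rmult_assoc, Rinv_l by lra. rewrite Rmult_1_r.
      apply Rle_abs.
    - apply Rmult_le_compat_l; [| exact Hh].
      apply Rle_mult_inv_pos; [apply Rabs_pos | exact Hdd]. }
  pose proof (inner_ge_half_sqnorm u h). rewrite Rmult_plus_distr_r.
  assert (EM : M = sqnorm u / 2 - K) by reflexivity. lra.
Qed.

Lemma subgrad_of_recentred (f : X -> ERbar) xb fxb a w :
  0 <= a -> f xb = Fin fxb ->
  (forall x fx, f x = Fin fx ->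
     fx - fxb >= inner w (vsub x xb) - a * sqnorm (vsub x xb)) ->
  subgrad f xb a (vadd w (vscal (2 * a) xb)).
Proof.
  intros Ha Hxb Hmin. split; [exact Ha |]. exists fxb. split; [exact Hxb |].
  intros x. destruct (f x) as [fx |] eqn:Efx; [| exact I].
  rewrite Rminus_0_r, phi_gap_recentre.
  rewrite vadd_subK. exact (Hmin x fx Efx).
Qed.

Lemma loc_subgrad_recentred (f : X -> ERbar) xb a v :
  loc_subgrad f xb a v ->
  exists fxb d, f xb = Fin fxb /\ 0 < d /\
    forall x fx, f x = Fin fx -> sqrt (sqnorm (vsub x xb)) < d ->
      fx - fxb >= inner (vsub v (vscal (2 * a) xb)) (vsub x xb)
                  - a * sqnorm (vsub x xb).
Proof.
  intros [_ [fxb [Hxb [d [Hd Hloc]]]]]. exists fxb, d.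
  split; [exact Hxb |]. split; [lra |].
  intros x fx Efx Hx. specialize (Hloc x Hx). rewrite Efx in Hloc.
  rewrite <- phi_gap_recentre. exact Hloc.
Qed.

Lemma in_supp_recentred (f : X -> ERbar) a0 v0 c0 xb :
  in_supp f a0 v0 c0 ->
  forall x fx, f x = Fin fx ->
    fx >= phi_lsc a0 v0 c0 xb + inner (vsub v0 (vscal (2 * a0) xb)) (vsub x xb)
          - a0 * sqnorm (vsub x xb).
Proof.
  intros [_ Hsupp] x fx Efx. specialize (Hsupp x). rewrite Efx in Hsupp.
  simpl in Hsupp. rewrite (phi_lsc_recentre _ _ _ _ xb) in Hsupp. lra.
Qed.

End InnerProduct.

Lemma sqr_le_of_not_sqrt_lt s d : 0 <= s -> 0 < d -> ~ sqrt s < d -> d * d <= s.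
Proof.
  intros Hs Hd Hge. apply Rnot_lt_le in Hge.
  rewrite <- (sqrt_sqrt s Hs). apply Rmult_le_compat; lra.
Qed.

Theorem mainTheorem3 (X : Type) (HX : RealHilbert X) (f : X -> ERbar) (xb : X)
  (a : R) (v : X) :
  proper f -> Phi_lsc_convex f -> dom f xb ->
  loc_subgrad f xb a v ->
  exists ab, ab >= 0 /\
    subgrad f xb ab (vadd (vsub v (vscal (2 * a) xb)) (vscal (2 * ab) xb)).
Proof.
  intros [[a0 [v0 [c0 Hsupp]]] _] _ _ Hloc.
  pose proof (proj1 Hsupp) as Ha0. pose proof (proj1 Hloc) as Ha.
  destruct (loc_subgrad_recentred f xb a v Hloc) as [fxb [d [Hxb [Hd Hnear]]]].
  set (w := vsub v (vscal (2 * a) xb)).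
  set (w0 := vsub v0 (vscal (2 * a0) xb)).
  destruct (quadratic_nonneg_far (vsub w0 w) (phi_lsc a0 v0 c0 xb - fxb) d Hd)
    as [c Hfar].
  set (ab := Rmax a (a0 + c)).
  assert (Hab : a <= ab /\ a0 + c <= ab) by (split; [apply Rmax_l | apply Rmax_r]).
  exists ab. split; [lra |].
  apply subgrad_of_recentred with fxb; [lra | exact Hxb |].
  intros x fx Efx.
  pose proof (inner_pos (vsub x xb)) as Hh. fold (sqnorm (vsub x xb)) in Hh.
  destruct (Rlt_dec (sqrt (sqnorm (vsub x xb))) d) as [Hlt | Hge].
  - specialize (Hnear x fx Efx Hlt). fold w in Hnear. nra.
  - specialize (Hfar _ (sqr_le_of_not_sqrt_lt _ _ Hh Hd Hge)).
    pose proof (in_supp_recentred f a0 v0 c0 xb Hsupp x fx Efx) as Hglob.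
    fold w0 in Hglob. rewrite inner_sub_l in Hfar. nra.
Qed.
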